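(* Let $S=[S_1,\ldots,S_m]$ be a sequence of propositional formulae and $I,J$ models. Then $I \equiv_S J$ holds if and only if $I \equiv_Q J$ holds for every formula $Q = (B_1 \equiv S_1) \wedge \cdots \wedge (B_m \equiv S_m)$, where every $B_i$ is either $\top$ or $\bot$.
   Context: Models are truth assignments. For a formula $F$: $I \leq_F J$ iff $I \models F$ or $J \not\models F$. For a sequence $S=[S_1,\ldots,S_m]$: $I \leq_S J$ iff either $S=[]$, or ($I \leq_{S_1} J$ and (either $J \not\leq_{S_1} I$ or $I \leq_R J$)), where $R=[S_2,\ldots,S_m]$. $I \equiv_S J$ means $I \leq_S J$ and $J \leq_S I$; for a single formula $Q$, $I\equiv_Q J$ means $I\leq_Q J$ and $J\leq_Q I$. *)

From Stdlib Require Import List Bool.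
Import ListNotations.

Inductive formula : Type :=
| FVar : nat -> formula
| FTop : formula
| FBot : formula
| FNot : formula -> formula
| FAnd : formula -> formula -> formula
| FOr  : formula -> formula -> formula
| FImp : formula -> formula -> formula
| FIff : formula -> formula -> formula.

Definition model := nat -> bool.

Fixpoint sat (I : model) (F : formula) : Prop :=
  match F with
  | FVar x => I x = true
  | FTop => True
  | FBot => False
  | FNot G => ~ sat I G
  | FAnd G H => sat I G /\ sat I H
  | FOr G H => sat I G \/ sat I H
  | FImp G H => sat I G -> sat I H
  | FIff G H => (sat I G <-> sat I H)
  end.

Definition leF (F : formula) (I J : model) : Prop := sat I F \/ ~ sat J F.

Fixpoint leS (S : list formula) (I J : model) : Prop :=
  match S with
  | [] => True
  | S1 :: R => leF S1 I J /\ (~ leF S1 J I \/ leS R I J)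
  end.

Definition eqS (S : list formula) (I J : model) : Prop := leS S I J /\ leS S J I.
Definition eqF (Q : formula) (I J : model) : Prop := leF Q I J /\ leF Q J I.

Definition const_of (b : bool) : formula := if b then FTop else FBot.

Definition Qform (B : list bool) (S : list formula) : formula :=
  fold_right (fun p acc => FAnd (FIff (const_of (fst p)) (snd p)) acc) FTop
             (combine B S).

(* I ≡_F J means that I and J agree on F, and unfolding the lexicographic
   order shows that I ≡_S J holds exactly when I and J agree on every S_i.  Any model
   satisfies the Q built from its own truth values of the S_i, and a model
   satisfies that Q only if it has those truth values; so agreement on all
   S_i is the same as agreement on all Q. *)

From Stdlib Require Import List Classical.
Import ListNotations.

Definition agree_on (S : list formula) (I J : model) : Prop :=
  Forall (fun F => sat I F <-> sat J F) S.

Lemma leF_iff (F : formula) (I J : model) : leF F I J <-> (sat J F -> sat I F).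
Proof.
  unfold leF; split; [tauto|].
  intros H; destruct (classic (sat J F)); tauto.
Qed.

Lemma eqF_iff (F : formula) (I J : model) : eqF F I J <-> (sat I F <-> sat J F).
Proof. unfold eqF; rewrite !leF_iff; tauto. Qed.

Lemma eqS_iff_agree_on (S : list formula) (I J : model) :
  eqS S I J <-> agree_on S I J.
Proof.
  unfold eqS, agree_on; induction S as [|F R IH]; simpl.
  - split; auto.
  - rewrite Forall_cons_iff, <- IH, !leF_iff.
    destruct (classic (sat I F)), (classic (sat J F)); tauto.
Qed.

Lemma sat_const_of (I : model) (b : bool) : sat I (const_of b) <-> b = true.
Proof. destruct b; simpl; intuition discriminate. Qed.

Lemma sat_Qform_cons (I : model) (b : bool) (B : list bool) (F : formula)
    (S : list formula) :
  sat I (Qform (b :: B) (F :: S)) <-> ((b = true <-> sat I F) /\ sat I (Qform B S)).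
Proof. unfold Qform; simpl; rewrite sat_const_of; tauto. Qed.

Lemma sat_Qform_agree_on (B : list bool) (S : list formula) (I J : model) :
  agree_on S I J -> (sat I (Qform B S) <-> sat J (Qform B S)).
Proof.
  intros Hagree; revert B; induction Hagree as [|F R HF _ IH]; intros [|b B];
    try (simpl; tauto).
  rewrite !sat_Qform_cons, (IH B); tauto.
Qed.

Lemma exists_sat_Qform (S : list formula) (I : model) :
  exists B, length B = length S /\ sat I (Qform B S).
Proof.
  induction S as [|F R [B [HB HI]]].
  - exists []; simpl; auto.
  - destruct (classic (sat I F)) as [HF|HF];
      [exists (true :: B) | exists (false :: B)];
      (split; [simpl; auto | rewrite sat_Qform_cons]).
    + tauto.
    + split; [split; [discriminate | tauto] | exact HI].
Qed.

Lemma agree_on_of_sat_Qform (B : list bool) (S : list formula) (I J : model) :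
  length B = length S -> sat I (Qform B S) -> sat J (Qform B S) -> agree_on S I J.
Proof.
  revert B; induction S as [|F R IH]; intros [|b B] HB HI HJ; try discriminate.
  - constructor.
  - rewrite sat_Qform_cons in HI, HJ; constructor.
    + tauto.
    + apply (IH B); [injection HB|..]; tauto.
Qed.

Theorem theorem1 (S : list formula) (I J : model) :
  eqS S I J <->
  (forall B : list bool, length B = length S -> eqF (Qform B S) I J).
Proof.
  rewrite eqS_iff_agree_on; setoid_rewrite eqF_iff; split.
  - intros Hagree B _; exact (sat_Qform_agree_on B S I J Hagree).
  - intros HQ.
    destruct (exists_sat_Qform S I) as [B [HB HI]].
    apply (agree_on_of_sat_Qform B S I J HB HI).
    apply (HQ B HB), HI.
Qed.
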